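(* Let $\mathcal{X}\subseteq\mathbb{R}^d$, let $\mathcal{D}$ be any distribution over pairs $(x,y)$ with $x\in\mathcal{X}$ and $y\in\{1,\dots,k\}$, and let $h:\mathcal{X}\to\{-1,1\}$ be any hypothesis. Let $\pi_i=P(y=i)$, and define \[ J(h)=2\sum_{i=1}^k \pi_i\,\bigl|P(h(x)>0)-P(h(x)>0\mid i)\bigr|. \] Then $J(h)\in[0,1]$. Furthermore, $J(h)=1$ if and only if $h$ induces a partition that is both maximally pure and maximally balanced, i.e. $\alpha=0$ and $\beta=1/2$, where $\alpha=\sum_{i=1}^k\pi_i\min\bigl(P(h(x)>0\mid i),P(h(x)<0\mid i)\bigr)$ and $\beta=P(h(x)>0)$.
   Context: $P(h(x)>0\mid i)$ denotes the probability that $h(x)>0$ conditional on the label being $i$. The quantity $\alpha$ is called the purity factor and $\beta$ the balancing factor. A partition is maximally pure if $\alpha=0$, meaning each class is sent exclusively to one side. It is maximally balanced if $\beta=1/2$. *)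

From HB Require Import structures.
From mathcomp Require Import all_boot all_order all_algebra.
From mathcomp Require Import all_classical all_reals all_analysis.
Set Implicit Arguments. Unset Strict Implicit. Unset Printing Implicit Defensive.
Import Order.TTheory GRing.Theory Num.Theory.
Local Open Scope classical_set_scope.
Local Open Scope ring_scope.

(* The distribution D over pairs (x, y) is represented as the joint law of
   random variables X : T -> 'rV[R]_d and Y : T -> 'I_k on a probability
   space (T, P).  Labels 1..k are represented by 'I_k = {0..k-1}. *)

Section PurityBalance.
Context {d0 : measure_display} {T : measurableType d0} {R : realType}.
Variables (P : probability T R) (d k : nat)
  (X : T -> 'rV[R]_d) (Y : T -> 'I_k) (h : 'rV[R]_d -> R).

Definition pr (A : set T) : R := fine (P A).

Definition ev_pos : set T := [set t | 0 < h (X t)].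
Definition ev_neg : set T := [set t | h (X t) < 0].
Definition ev_lab (i : 'I_k) : set T := [set t | Y t = i].

Definition prior (i : 'I_k) : R := pr (ev_lab i).

(* conditional probability P(A | y = i); (value 0 when pi_i = 0, which is
   irrelevant since it is always multiplied by pi_i) *)
Definition pcond (A : set T) (i : 'I_k) : R := pr (A `&` ev_lab i) / prior i.

Definition balance : R := pr ev_pos.

Definition purity : R :=
  \sum_(i < k) prior i * Num.min (pcond ev_pos i) (pcond ev_neg i).

Definition Jobj : R :=
  2 * \sum_(i < k) prior i * `| balance - pcond ev_pos i |.

End PurityBalance.

From HB Require Import structures.
From mathcomp Require Import all_boot all_order all_algebra.
From mathcomp Require Import all_classical all_reals all_analysis.
From mathcomp Require Import lra.
Set Implicit Arguments. Unset Strict Implicit. Unset Printing Implicit Defensive.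
Import Order.TTheory GRing.Theory Num.Theory.
Local Open Scope classical_set_scope.
Local Open Scope ring_scope.

(* Write p_i = P(h > 0, y = i) and q_i = P(h < 0, y = i), so that pi_i = p_i + q_i
   and beta = sum_i p_i.  The i-th term of J/2 is |beta q_i - (1 - beta) p_i|,
   which is at most beta q_i + (1 - beta) p_i; summing gives J <= 4 beta (1 - beta)
   <= 1, and J = 1 forces beta = 1/2.  At beta = 1/2 the i-th term is
   (p_i + q_i)/2 - min(p_i, q_i), hence J = 1 - 2 alpha. *)

Section RatioTerms.
Variable R : realFieldType.
Implicit Types b p q : R.

Lemma mul_norm_sub_ratio b p q : 0 <= p -> 0 <= q ->
  (p + q) * `|b - p / (p + q)| = `|b * q - (1 - b) * p|.
Proof.
move=> p_ge0 q_ge0; have [pq0|pq_neq0] := eqVneq (p + q) 0.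
  have [-> ->] : p = 0 /\ q = 0 by lra.
  by rewrite add0r !mul0r !mulr0 subr0 normr0.
have pq_gt0 : 0 < p + q by rewrite lt_neqAle eq_sym pq_neq0 addr_ge0.
rewrite -{1}(ger0_norm (ltW pq_gt0)) -normrM mulrBr mulrCA divff // mulr1.
congr `|_|; lra.
Qed.

Lemma mul_min_ratio p q : 0 <= p -> 0 <= q ->
  (p + q) * Num.min (p / (p + q)) (q / (p + q)) = Num.min p q.
Proof.
move=> p_ge0 q_ge0; have [pq0|pq_neq0] := eqVneq (p + q) 0.
  have [-> ->] : p = 0 /\ q = 0 by lra.
  by rewrite add0r mul0r minxx.
by rewrite minr_pMr ?addr_ge0 // !(mulrC (p + q)) !divfK.
Qed.

Lemma mul_norm_sub_ratio_le b p q : 0 <= p -> 0 <= q -> 0 <= b <= 1 ->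
  (p + q) * `|b - p / (p + q)| <= b * q + (1 - b) * p.
Proof.
move=> p_ge0 q_ge0 /andP[b_ge0 b_le1]; rewrite mul_norm_sub_ratio //.
have : 0 <= b * q by rewrite mulr_ge0.
have : 0 <= (1 - b) * p by rewrite mulr_ge0 // subr_ge0.
by rewrite ler_norml; move=> ? ?; apply/andP; split; lra.
Qed.

Lemma mul_norm_half_sub_ratio p q : 0 <= p -> 0 <= q ->
  (p + q) * `|1 / 2 - p / (p + q)| = (p + q) / 2 - Num.min p q.
Proof.
move=> p_ge0 q_ge0; rewrite mul_norm_sub_ratio //.
by case: (leP p q) => pq; [rewrite ger0_norm | rewrite ler0_norm]; lra.
Qed.

End RatioTerms.

Section SplitObjective.
Variables (R : realFieldType) (k : nat) (p q : 'I_k -> R).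
Hypotheses (p_ge0 : forall i, 0 <= p i) (q_ge0 : forall i, 0 <= q i).
Hypothesis sum_pq : \sum_(i < k) (p i + q i) = 1.

Local Notation b := (\sum_(i < k) p i).

Lemma sum_p_ge0_le1 : 0 <= b <= 1.
Proof.
have sum_q_ge0 : 0 <= \sum_(i < k) q i by apply: sumr_ge0.
have : 0 <= b by apply: sumr_ge0.
by move: sum_pq; rewrite big_split /=; move=> ? ?; apply/andP; split; lra.
Qed.

Lemma sum_mul_norm_sub_ratio_le :
  \sum_(i < k) (p i + q i) * `|b - p i / (p i + q i)| <= 2 * b * (1 - b).
Proof.
have sum_q : \sum_(i < k) q i = 1 - b by move: sum_pq; rewrite big_split /=; lra.
apply: le_trans (_ : \sum_(i < k) (b * q i + (1 - b) * p i) <= _).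
  by apply: ler_sum => i _; apply: mul_norm_sub_ratio_le; rewrite ?sum_p_ge0_le1.
by rewrite big_split /= -!mulr_sumr sum_q; lra.
Qed.

Lemma sum_mul_norm_half_sub_ratio :
  \sum_(i < k) (p i + q i) * `|1 / 2 - p i / (p i + q i)| =
  1 / 2 - \sum_(i < k) (p i + q i) * Num.min (p i / (p i + q i)) (q i / (p i + q i)).
Proof.
under eq_bigr do rewrite mul_norm_half_sub_ratio //.
under [X in _ = _ - X]eq_bigr do rewrite mul_min_ratio //.
by rewrite sumrB -mulr_suml sum_pq.
Qed.

Lemma split_objective_bounds :
  let J := 2 * \sum_(i < k) (p i + q i) * `|b - p i / (p i + q i)| in
  let alpha := \sum_(i < k) (p i + q i) * Num.min (p i / (p i + q i)) (q i / (p i + q i)) in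
  (0 <= J <= 1) /\ (J = 1 <-> alpha = 0 /\ b = 1 / 2).
Proof.
move=> J alpha.
have J_ge0 : 0 <= J.
  by rewrite mulr_ge0 //; apply: sumr_ge0 => i _; rewrite mulr_ge0 ?addr_ge0.
have J_le : J <= 4 * b * (1 - b).
  by have := sum_mul_norm_sub_ratio_le; rewrite /J; lra.
have J_half : b = 1 / 2 -> J = 1 - 2 * alpha.
  by move=> b_half; rewrite /J /alpha b_half sum_mul_norm_half_sub_ratio; lra.
have sq_ge0 : 0 <= (2 * b - 1) ^+ 2 by apply: sqr_ge0.
rewrite expr2 in sq_ge0.
split; first by apply/andP; split; nra.
split => [J1|[alpha0 b_half]]; last by rewrite J_half // alpha0; lra.
have b_half : b = 1 / 2 by nra.
by split => //; move: J1; rewrite J_half //; lra.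
Qed.

End SplitObjective.

Section LabelPartition.
Context {d0 : measure_display} {T : measurableType d0} {R : realType}.
Variables (P : probability T R) (k : nat) (Y : T -> 'I_k).
Hypothesis mY : forall i : 'I_k, measurable [set t | Y t = i].

Lemma pr_ge0 (A : set T) : 0 <= pr P A.
Proof. exact/fine_ge0/measure_ge0. Qed.

Lemma pr_DI (A B : set T) : measurable A -> measurable B ->
  pr P A = pr P (A `\` B) + pr P (A `&` B).
Proof.
move=> mA mB; rewrite /pr (measureDI P mA mB) fineD //;
  apply: fin_num_measure; [exact: measurableD | exact: measurableI].
Qed.

Lemma sum_pr_setI_lab (A : set T) : measurable A ->
  \sum_(i < k) pr P (A `&` ev_lab Y i) = pr P A.
Proof.
move=> mA; have mAY i : measurable (A `&` ev_lab Y i).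
  by apply: measurableI => //; exact: mY.
rewrite /pr sum_fine; last by move=> i _; exact: fin_num_measure.
rewrite -measure_bigsetU_ord //; last first.
  by move=> i j _ _ [t [[_ <-] [_ <-]]].
congr (fine (P _)); rewrite -bigcup_pred; apply/seteqP; split => [t [i _ []] //|t At].
by exists (Y t).
Qed.

Lemma sum_prior : \sum_(i < k) prior P Y i = 1.
Proof.
have <- : pr P setT = 1 by rewrite /pr probability_setT.
rewrite -(sum_pr_setI_lab measurableT).
by apply: eq_bigr => i _; rewrite setTI.
Qed.

Variables (d : nat) (X : T -> 'rV[R]_d) (h : 'rV[R]_d -> R).
Hypothesis mh : measurable (ev_pos X h).

Lemma prior_pos_neg (i : 'I_k) : (forall t, h (X t) != 0) ->
  prior P Y i = pr P (ev_pos X h `&` ev_lab Y i) + pr P (ev_neg X h `&` ev_lab Y i).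
Proof.
move=> h_neq0; rewrite /prior (pr_DI (mY i) mh) setIC addrC; congr (_ + pr P _).
apply/seteqP; split => t; rewrite /ev_pos /ev_neg /=.
  by move=> [Yt /negP]; rewrite -leNgt le_eqVlt (negbTE (h_neq0 t)).
by move=> [h_lt0 Yt]; split => //; apply/negP; rewrite -leNgt ltW.
Qed.

End LabelPartition.

Theorem lemma1 (d0 : measure_display) (T : measurableType d0) (R : realType)
  (P : probability T R) (d k : nat) (Xs : set 'rV[R]_d)
  (X : T -> 'rV[R]_d) (Y : T -> 'I_k) (h : 'rV[R]_d -> R)
  (hX : forall t, Xs (X t))
  (hh : forall v, Xs v -> h v = 1 \/ h v = -1)
  (mY : forall i : 'I_k, measurable [set t | Y t = i])
  (mh : measurable [set t | 0 < h (X t)]) :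
  (0 <= Jobj P X Y h <= 1) /\
  (Jobj P X Y h = 1 <->
     purity P X Y h = 0 /\ balance P X h = 1 / 2).
Proof.
pose p i := pr P (ev_pos X h `&` ev_lab Y i).
pose q i := pr P (ev_neg X h `&` ev_lab Y i).
have h_neq0 t : h (X t) != 0 by case: (hh _ (hX t)) => ->; rewrite ?oppr_eq0 oner_eq0.
have prior_pq : prior P Y = fun i => p i + q i.
  by apply/funext => i; exact: prior_pos_neg.
have sum_pq : \sum_(i < k) (p i + q i) = 1 by rewrite -(sum_prior P mY) prior_pq.
have balance_p : balance P X h = \sum_(i < k) p i.
  by rewrite /balance -(sum_pr_setI_lab P mY mh).
have := split_objective_bounds (fun i => pr_ge0 P _) (fun i => pr_ge0 P _) sum_pq.
by rewrite /Jobj /purity /pcond balance_p prior_pq.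
Qed.
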